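(* Let $(\mathbf{P},d_{\mathbf{P}})$ be a finite metric poset and let $M,N$ be $\mathbf{P}$-modules. Then \[ \mathrm{dist}_{\mathrm{B}}\bigl(P^M_\bullet,P^N_\bullet\bigr)\ \le\ d_{\mathrm{GT}}(M,N). \]
   Context: Fix a field $k$; $\mathrm{vect}$ denotes the category of finite-dimensional $k$-vector spaces. A finite poset $\mathbf{P}$ is regarded as a category with a unique morphism $x\to y$ iff $x\le y$. A $\mathbf{P}$-module is a functor $\mathbf{P}\to\mathrm{vect}$; $\mathrm{vect}^{\mathbf{P}}$ is the category of $\mathbf{P}$-modules. For a monotone map $g:\mathbf{P}\to\mathbf{Q}$, $g^*:\mathrm{vect}^{\mathbf{Q}}\to\mathrm{vect}^{\mathbf{P}}$ is precomposition $N\mapsto N\circ g$. A finite metric poset is a finite poset $\mathbf{P}$ with a metric $d_{\mathbf{P}}$ on its underlying set. Galois insertions and transport. A Galois connection $f:\mathbf{Q}\rightleftarrows\mathbf{P}:g$ consists of monotone maps $f:\mathbf{Q}\to\mathbf{P}$, $g:\mathbf{P}\to\mathbf{Q}$ with $f(u)\le x\iff u\le g(x)$ for all $u\in\mathbf{Q},x\in\mathbf{P}$; it is a Galois insertion if moreover $f\circ g=\mathrm{id}_{\mathbf{P}}$. For $M,N\in\mathrm{vect}^{\mathbf{P}}$, a Galois coupling $(\mathbf{Q},f\dashv g,h\dashv i,\Gamma)$ of $(M,N)$ consists of a finite poset $\mathbf{Q}$, two Galois insertions $f:\mathbf{Q}\rightleftarrows\mathbf{P}:g$ and $h:\mathbf{Q}\rightleftarrows\mathbf{P}:i$,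 and $\Gamma\in\mathrm{vect}^{\mathbf{Q}}$ with $g^*\Gamma\cong M$ and $i^*\Gamma\cong N$. Its cost is $\mathrm{cost}(\Gamma)=\sup_{q\in\mathbf{Q}}d_{\mathbf{P}}(f(q),h(q))$. The Galois transport distance $d_{\mathrm{GT}}(M,N)$ is the infimum of the costs of all Galois couplings of $(M,N)$, and $\infty$ if there is none. Projectives and resolutions. For $x\in\mathbf{P}$, $k[\mathbf{P}]_x$ is the $\mathbf{P}$-module with $k[\mathbf{P}]_x(y)=k$ if $x\le y$ and $0$ otherwise, all structure maps between nonzero spaces being $\mathrm{id}_k$; up to isomorphism these are exactly the indecomposable projective $\mathbf{P}$-modules and every projective $\mathbf{P}$-module is a finite direct sum of them. For $x,y\in\mathbf{P}$ with $y\le x$ let $\rho(x\ge y):k[\mathbf{P}]_x\to k[\mathbf{P}]_y$ be the morphism which is $\mathrm{id}_k$ at every $z\ge x$ (it spans the one-dimensional Hom space); set $\rho(x\ge y)=0$ if $y\not\le x$. If $E=\bigoplus_{x\in\mathrm{smd}(E)}k[\mathbf{P}]_x$ and $F=\bigoplus_{y\in\mathrm{smd}(F)}k[\mathbf{P}]_y$ are projectives given with such decompositions ($\mathrm{smd}(E)$ is the finite multiset/list of indices), every morphism $\alpha:E\to F$ is uniquely a matrix $[a_{x,y}\rho(x\ge y)]$ with $a_{x,y}\in k$ and $a_{x,y}=0$ unless $x\ge y$; $\mathrm{Mat}(\alpha):=[a_{x,y}]_{(x,y)\in\mathrm{smd}(E)\times\mathrm{smd}(F)}$. A projective resolution of $M$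 is a complex $E_\bullet=(E_i,\partial^E_i:E_{i+1}\to E_i)_{i\ge0}$ of projective $\mathbf{P}$-modules with an augmentation $E_0\to M$ making $\cdots\to E_1\to E_0\to M\to0$ exact; each $E_i$ is considered with a fixed decomposition into indecomposable projectives, $|E_i|$ is the number of summands. $P^M_\bullet$ denotes a minimal projective resolution of $M$. $\mathsf{Res}(P^M_\bullet,P^N_\bullet)$ is the set of pairs $(E_\bullet,F_\bullet)$ where $E_\bullet$ is a projective resolution of $M$ and $F_\bullet$ one of $N$ with $|E_i|=|F_i|$ for all $i$. A matching of $(E_\bullet,F_\bullet)$ is a family $B=(B_i)_{i\ge0}$ of bijections $B_i:\mathrm{smd}(E_i)\to\mathrm{smd}(F_i)$ (of indexed multisets) such that for all $i\ge0$, $x\in\mathrm{smd}(E_i)$, $x'\in\mathrm{smd}(E_{i+1})$, the $(x',x)$-entry of $\mathrm{Mat}(\partial^E_i)$ equals the $(B_{i+1}(x'),B_i(x))$-entry of $\mathrm{Mat}(\partial^F_i)$. Its cost is $\mathrm{cost}(B)=\sup\{d_{\mathbf{P}}(x,B_i(x))\mid i\ge0,x\in\mathrm{smd}(E_i)\}$. $\mathrm{dist}_{\mathrm{R}}(E_\bullet,F_\bullet)$ is the infimum of costs over matchings ($\infty$ if none), and $\mathrm{dist}_{\mathrm{B}}(P^M_\bullet,P^N_\bullet):=\inf_{(E_\bullet,F_\bullet)\in\mathsf{Res}(P^M_\bullet,P^N_\bullet)}\mathrm{dist}_{\mathrm{R}}(E_\bullet,F_\bullet)$, which is $\infty$ if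 that set is empty. *)

From HB Require Import structures.
From mathcomp Require Import all_boot all_order all_algebra.
From mathcomp Require Import boolp classical_sets reals constructive_ereal ereal.

Set Implicit Arguments.
Unset Strict Implicit.
Unset Printing Implicit Defensive.

Import Order.TTheory GRing.Theory Num.Theory.
Local Open Scope classical_set_scope.
Local Open Scope ring_scope.

(** A finite-dimensional k-vector space is k^n (row vectors); a linear map
    k^m -> k^n is a matrix A : 'M_(m,n) acting by v |-> v *m A.            *)

Section Modules.
Variable F : fieldType.

Record pmod (d : Order.disp_t) (P : finPOrderType d) := PMod {
  dimv : P -> nat;
  rmap : forall x y : P, 'M[F]_(dimv x, dimv y)   (* meaningful for x <= y *)
}.
Arguments dimv {d P} _ _.
Arguments rmap {d P} _ _ _.

Definition functorial d (P : finPOrderType d) (M : pmod P) : Prop :=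
  (forall x : P, rmap M x x = 1%:M) /\
  (forall x y z : P, (x <= y)%O -> (y <= z)%O ->
     rmap M x z = rmap M x y *m rmap M y z).

Definition natural d (P : finPOrderType d) (M N : pmod P)
  (phi : forall x : P, 'M[F]_(dimv M x, dimv N x)) : Prop :=
  forall x y : P, (x <= y)%O -> phi x *m rmap N x y = rmap M x y *m phi y.

Definition mod_iso d (P : finPOrderType d) (M N : pmod P) : Prop :=
  exists (phi : forall x : P, 'M[F]_(dimv M x, dimv N x))
         (psi : forall x : P, 'M[F]_(dimv N x, dimv M x)),
    [/\ natural phi, natural psi,
        (forall x, phi x *m psi x = 1%:M) & (forall x, psi x *m phi x = 1%:M)].

Definition pullback d d' (P : finPOrderType d) (Q : finPOrderType d')
  (g : P -> Q) (N : pmod Q) : pmod P :=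
  @PMod d P (fun x => dimv N (g x)) (fun x y => rmap N (g x) (g y)).

(** * Projective modules  E = (+)_{j < n} k[P]_{lab j}.
    E(z) has basis the j with lab j <= z; the structure maps are the
    coordinate inclusions (identity on each summand).                    *)

Definition supp d (P : finPOrderType d) n (lab : 'I_n -> P) (z : P)
  : {set 'I_n} := [set j | (lab j <= z)%O].

Definition projmod d (P : finPOrderType d) n (lab : 'I_n -> P) : pmod P :=
  @PMod d P (fun z => #|supp lab z|)
    (fun z w => \matrix_(a, b)
        ((enum_val a == enum_val b :> 'I_n)%:R : F)).

(* the morphism (+)_j k[P]_{lt j} -> (+)_k k[P]_{ls k} with matrix
   [A j k * rho(lt j >= ls k)] *)
Definition projmap d (P : finPOrderType d) m n (lt : 'I_m -> P) (ls : 'I_n -> P)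
  (A : 'M[F]_(m, n)) (z : P) :
  'M[F]_(dimv (projmod lt) z, dimv (projmod ls) z) :=
  \matrix_(a, b) A (enum_val a) (enum_val b).

(* a coefficient matrix defines a morphism iff a_{x,y} = 0 unless x >= y *)
Definition admissible d (P : finPOrderType d) m n (lt : 'I_m -> P)
  (ls : 'I_n -> P) (A : 'M[F]_(m, n)) : Prop :=
  forall j k, ~~ (ls k <= lt j)%O -> A j k = 0.

(** * Projective resolutions with fixed decompositions.
    E_i = (+)_{j < len i} k[P]_{lab i j}, differential
    d_i : E_{i+1} -> E_i with matrix Mat(d_i) = dif i, augmentation
    aug : E_0 -> M.                                                     *)
Record presol d (P : finPOrderType d) := PRes {
  len : nat -> nat;
  lab : forall i, 'I_(len i) -> P;
  dif : forall i, 'M[F]_(len i.+1, len i)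
}.
Arguments len {d P} _ _.
Arguments lab {d P} _ _ _.
Arguments dif {d P} _ _.

Definition exact_at m n p (A : 'M[F]_(m, n)) (B : 'M[F]_(n, p)) : Prop :=
  (A == kermx B)%MS.

Definition is_resolution d (P : finPOrderType d) (M : pmod P) (E : presol P) : Prop :=
  (forall i, admissible (lab E i.+1) (lab E i) (dif E i)) /\
  exists aug : forall z : P, 'M[F]_(dimv (projmod (lab E 0)) z, dimv M z),
    [/\ natural aug,
        (forall z, row_full (aug z)),
        (forall z, exact_at (projmap (lab E 1) (lab E 0) (dif E 0) z) (aug z)) &
        (forall i z, exact_at (projmap (lab E i.+2) (lab E i.+1) (dif E i.+1) z)
                              (projmap (lab E i.+1) (lab E i) (dif E i) z))].

End Modules.
Arguments dimv {F d P} _ _.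
Arguments rmap {F d P} _ _ _.
Arguments len {F d P} _ _.
Arguments lab {F d P} _ _ _.
Arguments dif {F d P} _ _.

Section Distances.
Variable F : fieldType.
Variable R : realType.
Local Open Scope ereal_scope.

Definition is_metric (T : Type) (dist : T -> T -> R) : Prop :=
  (forall x y, (0 <= dist x y)%R) /\
  (forall x y, dist x y = 0%R <-> x = y) /\
  (forall x y, dist x y = dist y x) /\
  (forall x y z, (dist x z <= dist x y + dist y z)%R).

(* supremum of a family of nonnegative distances (sup of the empty family = 0) *)
Definition nnsup (S : set R) : \bar R := ereal_sup ([set 0] `|` (EFin @` S)).

Definition is_matching d (P : finPOrderType d) (E G : presol F P)
  (B : forall i, 'I_(len E i) -> 'I_(len G i)) : Prop :=
  (forall i, bijective (B i)) /\
  (forall i (x' : 'I_(len E i.+1)) (x : 'I_(len E i)),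
      dif E i x' x = dif G i (B i.+1 x') (B i x)).

Definition matching_cost d (P : finPOrderType d) (dP : P -> P -> R)
  (E G : presol F P) (B : forall i, 'I_(len E i) -> 'I_(len G i)) : \bar R :=
  nnsup [set r | exists i (x : 'I_(len E i)), r = dP (lab E i x) (lab G i (B i x))].

Definition dist_R d (P : finPOrderType d) (dP : P -> P -> R) (E G : presol F P)
  : \bar R :=
  ereal_inf [set c | exists B : forall i, 'I_(len E i) -> 'I_(len G i), is_matching B /\ c = matching_cost dP B].

Definition dist_B d (P : finPOrderType d) (dP : P -> P -> R) (M N : pmod F P)
  : \bar R :=
  ereal_inf [set c | exists (E G : presol F P),
     [/\ is_resolution M E, is_resolution N G,
         (forall i, len E i = len G i) & c = dist_R dP E G]].

Definition galois_insertion d d' (P : finPOrderType d) (Q : finPOrderType d')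
  (f : Q -> P) (g : P -> Q) : Prop :=
  [/\ {homo f : u v / (u <= v)%O}, {homo g : x y / (x <= y)%O},
      (forall (u : Q) (x : P), (f u <= x)%O = (u <= g x)%O) &
      (forall x : P, f (g x) = x)].

Definition galois_coupling d (P : finPOrderType d) (M N : pmod F P)
  d' (Q : finPOrderType d') (f : Q -> P) (g : P -> Q) (h : Q -> P) (i : P -> Q)
  (Gam : pmod F Q) : Prop :=
  [/\ galois_insertion f g, galois_insertion h i, functorial Gam,
      mod_iso (pullback g Gam) M & mod_iso (pullback i Gam) N].

Definition coupling_cost d (P : finPOrderType d) (dP : P -> P -> R)
  d' (Q : finPOrderType d') (f h : Q -> P) : \bar R :=
  nnsup [set r | exists q : Q, r = dP (f q) (h q)].

Definition d_GT d (P : finPOrderType d) (dP : P -> P -> R) (M N : pmod F P)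
  : \bar R :=
  ereal_inf [set c | exists (d' : Order.disp_t) (Q : finPOrderType d')
     (f : Q -> P) (g : P -> Q) (h : Q -> P) (i : P -> Q) (Gam : pmod F Q),
     galois_coupling M N f g h i Gam /\ c = coupling_cost dP f h].

End Distances.

(* Take a Galois coupling (Q, f -| g, h -| i, Gam) and any projective resolution
   E of Gam over Q; here E covers Gam, and then each successive kernel, by all of
   its vectors at all points.  Since f u <= x iff u <= g x, the pullback along g
   of k[Q]_u is k[P]_(f u), and pulling back is exact; so relabelling every
   summand u of E by f u gives a resolution of g^* Gam ~ M, relabelling it by h u
   one of i^* Gam ~ N, and the two have the same differential matrices.  The
   identity matching between them costs sup_u d(f u, h u), the cost of the
   coupling. *)

From Pilot Require Import Defs.
From HB Require Import structures.
From mathcomp Require Import all_boot all_order all_algebra.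
From mathcomp Require Import boolp classical_sets reals constructive_ereal ereal.
Import Defs.

Set Implicit Arguments.
Unset Strict Implicit.
Unset Printing Implicit Defensive.

Import Order.TTheory GRing.Theory.
Local Open Scope ring_scope.

Definition inclmx (F : fieldType) n (S : {set 'I_n}) : 'M[F]_(#|S|, n) :=
  \matrix_(a, j) (enum_val a == j)%:R.

Section Inclusion.
Context {F : fieldType}.

Lemma row_inclmx n (S : {set 'I_n}) a : row a (inclmx F S) = delta_mx 0 (enum_val a).
Proof. by apply/rowP => j; rewrite !mxE eqxx /= eq_sym. Qed.

Lemma row_inclmxM n (S : {set 'I_n}) p (B : 'M[F]_(n, p)) a :
  row a (inclmx F S *m B) = row (enum_val a) B.
Proof. by rewrite row_mul row_inclmx -rowE. Qed.

Lemma mulmx_inclmxT_entry n (S : {set 'I_n}) p (B : 'M[F]_(p, n)) a b :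
  (B *m (inclmx F S)^T) a b = B a (enum_val b).
Proof.
rewrite !mxE (bigD1 (enum_val b)) //= !mxE eqxx mulr1 big1 ?addr0 // => j /negbTE nj.
by rewrite !mxE eq_sym nj mulr0.
Qed.

Lemma inclmx_mulT n (S : {set 'I_n}) : inclmx F S *m (inclmx F S)^T = 1%:M.
Proof.
by apply/matrixP => a b; rewrite mulmx_inclmxT_entry !mxE (inj_eq enum_val_inj).
Qed.

Lemma inclmx_subset n (S S' : {set 'I_n}) : S \subset S' ->
  inclmx F S *m (inclmx F S')^T *m inclmx F S' = inclmx F S.
Proof.
move=> sSS'; apply/row_matrixP => a; rewrite -mulmxA row_inclmxM.
have S'a : enum_val a \in S' := fintype.subsetP sSS' _ (enum_valP a).
by rewrite -(enum_rankK_in S'a S'a) -row_inclmxM mulmxA inclmx_mulT mul1mx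
  !row_inclmx (enum_rankK_in S'a S'a).
Qed.

Lemma row_sub_inclmxM n (S : {set 'I_n}) p (B : 'M[F]_(n, p)) j :
  j \in S -> (row j B <= inclmx F S *m B)%MS.
Proof. by move=> Sj; rewrite -(enum_rankK_in Sj Sj) -row_inclmxM row_sub. Qed.

Lemma sub_inclmx_entry0 n (S : {set 'I_n}) (v : 'rV[F]_n) j :
  (v <= inclmx F S)%MS -> j \notin S -> v 0 j = 0.
Proof.
case/submxP => X -> Sj; rewrite mxE big1 // => a _; rewrite mxE.
by case: eqP => [ej|]; [move: (enum_valP a); rewrite ej (negbTE Sj) | rewrite mulr0].
Qed.

End Inclusion.

Section ProjectiveModules.
Variables (F : fieldType) (d : Order.disp_t) (T : finPOrderType d).

Lemma supp_homo n (lab : 'I_n -> T) x z :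
  (x <= z)%O -> supp lab x \subset supp lab z.
Proof. by move=> le_xz; apply/fintype.subsetP => j; rewrite !inE => /le_trans; apply. Qed.

Lemma projmod_rmap n (lab : 'I_n -> T) x z :
  rmap (projmod F lab) x z = inclmx F (supp lab x) *m (inclmx F (supp lab z))^T.
Proof. by apply/matrixP => a b; rewrite mulmx_inclmxT_entry !mxE. Qed.

Lemma projmap_inclmx m n (lt : 'I_m -> T) (ls : 'I_n -> T) (A : 'M[F]_(m, n)) z :
  projmap lt ls A z = inclmx F (supp lt z) *m A *m (inclmx F (supp ls z))^T.
Proof.
apply/matrixP => a b; rewrite mulmx_inclmxT_entry !mxE.
by have /rowP/(_ (enum_val b)) := row_inclmxM A a; rewrite !mxE.
Qed.

Lemma projmod_functorial n (lab : 'I_n -> T) : functorial (projmod F lab).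
Proof.
split=> [x | x y z le_xy le_yz]; rewrite !projmod_rmap ?inclmx_mulT //.
by rewrite mulmxA (inclmx_subset (supp_homo lab le_xy)).
Qed.

End ProjectiveModules.

(* The projective module with one summand k[T]_x for each row of [K x], mapped
   to [V] by sending the generator of that summand to the row. *)
Section Cover.
Variables (F : fieldType) (d : Order.disp_t) (T : finPOrderType d).
Variables (V : pmod F T) (r : T -> nat) (K : forall x, 'M[F]_(r x, dimv V x)).

Local Notation cover_gen := {x : T & 'I_(r x)}.
Definition cover_lab (k : 'I_#|{: cover_gen}|) : T := tag (enum_val k).
Definition cover_mx z : 'M[F]_(#|{: cover_gen}|, dimv V z) :=
  \matrix_k (row (tagged (enum_val k)) (K (tag (enum_val k)))
             *m rmap V (tag (enum_val k)) z).
Definition cover_map z : 'M[F]_(dimv (projmod F cover_lab) z, dimv V z) :=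
  inclmx F (supp cover_lab z) *m cover_mx z.

Hypothesis V_functorial : functorial V.

Lemma cover_map_natural : natural cover_map.
Proof.
move=> x z le_xz; rewrite projmod_rmap /cover_map mulmxA.
rewrite (inclmx_subset (supp_homo _ le_xz)); apply/row_matrixP => a.
have le_ex : (tag (enum_val (enum_val a)) <= x)%O by have := enum_valP a; rewrite inE.
case: V_functorial => _ /(_ _ _ _ le_ex le_xz) V_comp.
by rewrite row_mul !row_inclmxM !rowK -mulmxA V_comp.
Qed.

Hypothesis K_closed : forall x z, (x <= z)%O -> (K x *m rmap V x z <= K z)%MS.

Lemma cover_map_eqmx z : (cover_map z :=: K z)%MS.
Proof.
apply/eqmxP/andP; split; apply/row_subP => a.
  rewrite row_inclmxM rowK.
  have le_ez : (tag (enum_val (enum_val a)) <= z)%O by have := enum_valP a; rewrite inE.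
  by apply: submx_trans (K_closed le_ez); rewrite submxMr ?row_sub.
pose e : cover_gen := existT _ z a.
have He : enum_rank e \in supp cover_lab z by rewrite inE /cover_lab enum_rankK.
apply: submx_trans (row_sub_inclmxM _ He).
by rewrite rowK enum_rankK /=; case: V_functorial => -> _; rewrite mulmx1.
Qed.

End Cover.

Arguments cover_lab {d T} r k.
Arguments cover_map {F d T} V {r} K z.

Section ProjectiveCover.
Variables (F : fieldType) (d : Order.disp_t) (T : finPOrderType d).
Variables (n : nat) (lab : 'I_n -> T) (r : T -> nat).
Variable K : forall x, 'M[F]_(r x, dimv (projmod F lab) x).

Definition cover_coef : 'M[F]_(#|{: {x : T & 'I_(r x)}}|, n) :=
  \matrix_k (row (tagged (enum_val k)) (K (tag (enum_val k)))
             *m inclmx F (supp lab (tag (enum_val k)))).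

Lemma cover_map_projmod z :
  cover_map (projmod F lab) K z = projmap (cover_lab r) lab cover_coef z.
Proof.
rewrite projmap_inclmx /cover_map -mulmxA; congr (_ *m _).
by apply/row_matrixP => k; rewrite row_mul !rowK projmod_rmap mulmxA.
Qed.

Lemma cover_coef_admissible : admissible (cover_lab r) lab cover_coef.
Proof.
move=> k j not_le.
have sub : (row k cover_coef <= inclmx F (supp lab (cover_lab r k)))%MS.
  by rewrite rowK submxMl.
suff : row k cover_coef 0 j = 0 by rewrite mxE.
by apply: sub_inclmx_entry0 sub _; rewrite inE.
Qed.

End ProjectiveCover.

Section CoverResolution.
Variables (F : fieldType) (d : Order.disp_t) (T : finPOrderType d).

Record stage := Stage {
  stgt : pmod F T;
  slen : nat;
  slab : 'I_slen -> T;
  smap : forall z, 'M[F]_(dimv (projmod F slab) z, dimv stgt z) }.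
Arguments slab : clear implicits.

Definition kernel_cover (s : stage) : stage :=
  Stage (cover_map (projmod F (slab s)) (fun x => kermx (smap s x))).

Definition stage_dif (s : stage) : 'M[F]_(slen (kernel_cover s), slen s) :=
  cover_coef (fun x => kermx (smap s x)).

Lemma smap_kernel_cover s z :
  smap (kernel_cover s) z = projmap (slab (kernel_cover s)) (slab s) (stage_dif s) z.
Proof. exact: cover_map_projmod. Qed.

Lemma kernel_cover_natural s : natural (smap (kernel_cover s)).
Proof. exact/cover_map_natural/projmod_functorial. Qed.

Lemma kernel_cover_exact s : natural (smap s) ->
  forall z, exact_at (smap (kernel_cover s) z) (smap s z).
Proof.
move=> smap_natural z; apply/eqmxP/cover_map_eqmx; first exact: projmod_functorial.
move=> x y le_xy; apply/sub_kermxP.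
by rewrite -mulmxA -smap_natural // mulmxA mulmx_ker mul0mx.
Qed.

Variable Gam : pmod F T.

Definition stage0 : stage := Stage (cover_map Gam (fun x => 1%:M)).

Definition cover_stage i := iter i kernel_cover stage0.

(* Far from minimal, but [dist_B] ranges over all resolutions. *)
Definition cover_resolution : presol F T :=
  PRes (fun i => slab (cover_stage i)) (fun i => stage_dif (cover_stage i)).

Hypothesis Gam_functorial : functorial Gam.

Lemma cover_stage_natural i : natural (smap (cover_stage i)).
Proof.
by case: i => [|i]; [exact: cover_map_natural | exact: kernel_cover_natural].
Qed.

Lemma is_resolution_cover : is_resolution Gam cover_resolution.
Proof.
split=> [i|]; first exact: cover_coef_admissible.
exists (smap stage0); split.
- exact: (cover_stage_natural 0).
- move=> z; rewrite -sub1mx (cover_map_eqmx Gam_functorial) ?submx1 //.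
  by move=> x y _; rewrite mul1mx submx1.
- move=> z; have := kernel_cover_exact (cover_stage_natural 0) z.
  by rewrite smap_kernel_cover.
- move=> i z; have := kernel_cover_exact (cover_stage_natural i.+1) z.
  by rewrite !smap_kernel_cover.
Qed.

End CoverResolution.

Definition relabel (F : fieldType) d d' (Q : finPOrderType d') (P : finPOrderType d)
  (f : Q -> P) (E : presol F Q) : presol F P :=
  PRes (fun i j => f (lab E i j)) (dif E).

Section GaloisPullback.
Variables (F : fieldType) (d d' : Order.disp_t).
Variables (P : finPOrderType d) (Q : finPOrderType d') (f : Q -> P) (g : P -> Q).
Hypothesis adj_fg : forall u x, (f u <= x)%O = (u <= g x)%O.

Lemma adj_homo_left : {homo f : u v / (u <= v)%O}.
Proof. by move=> u v le_uv; rewrite adj_fg (le_trans le_uv) // -adj_fg. Qed.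

Lemma adj_homo_right : {homo g : x y / (x <= y)%O}.
Proof. by move=> x y le_xy; rewrite -adj_fg (le_trans _ le_xy) // adj_fg. Qed.

Lemma supp_adj n (l : 'I_n -> Q) z : supp (fun j => f (l j)) z = supp l (g z).
Proof. by apply/setP => j; rewrite !inE adj_fg. Qed.

Lemma is_resolution_relabel (Gam : pmod F Q) (E : presol F Q) :
  is_resolution Gam E -> is_resolution (pullback g Gam) (relabel f E).
Proof.
case=> E_adm [aug [aug_natural aug_full aug_exact E_exact]]; split=> [i j k|].
  by move=> not_le; apply: E_adm; apply: contra not_le; apply: adj_homo_left.
(* [inclmx S *m (inclmx S')^T] is the identity once [supp_adj] identifies [S]
   and [S']; it only converts the row indices of [aug (g z)]. *)
exists (fun z => inclmx F (supp (fun j => f (lab E 0 j)) z)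
                 *m (inclmx F (supp (lab E 0) (g z)))^T *m aug (g z)); split.
- move=> x y le_xy; rewrite projmod_rmap /= !supp_adj !inclmx_mulT !mul1mx.
  by rewrite -projmod_rmap -aug_natural ?adj_homo_right.
- by move=> z /=; rewrite supp_adj inclmx_mulT mul1mx aug_full.
- move=> z /=; rewrite projmap_inclmx !supp_adj inclmx_mulT mul1mx -projmap_inclmx.
  exact: aug_exact.
- move=> i z /=; rewrite !projmap_inclmx !supp_adj -!projmap_inclmx.
  exact: E_exact.
Qed.

End GaloisPullback.

Lemma kermxMfree (F : fieldType) m n p (A : 'M[F]_(m, n)) (B : 'M[F]_(n, p)) :
  row_free B -> (kermx (A *m B) :=: kermx A)%MS.
Proof.
move=> freeB; apply/eqmxP/andP; split; rewrite sub_kermx.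
  by rewrite -(mulmx_free_eq0 _ freeB) -mulmxA mulmx_ker.
by rewrite mulmxA mulmx_ker mul0mx.
Qed.

Lemma is_resolution_iso (F : fieldType) d (P : finPOrderType d) (M N : pmod F P)
  (E : presol F P) : mod_iso M N -> is_resolution M E -> is_resolution N E.
Proof.
case=> phi [psi [phi_natural _ phi_psi psi_phi]].
case=> E_adm [aug [aug_natural aug_full aug_exact E_exact]].
have phi_free z : row_free (phi z) by apply/row_freeP; exists (psi z).
split=> //; exists (fun z => aug z *m phi z); split=> //.
- by move=> x y le_xy; rewrite -mulmxA phi_natural // !mulmxA aug_natural.
- move=> z; rewrite /row_full (eqmxMfull _ (aug_full z)).
  by apply/row_fullP; exists (psi z).
- move=> z; apply/eqmxP/(eqmx_trans (eqmxP (aug_exact z))).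
  exact/eqmx_sym/kermxMfree.
Qed.

Local Open Scope ereal_scope.

Lemma dist_R_relabel (F : fieldType) (R : realType) d d' (P : finPOrderType d)
  (Q : finPOrderType d') (dP : P -> P -> R) (E : presol F Q) (f h : Q -> P) :
  dist_R dP (relabel f E) (relabel h E) <= coupling_cost dP f h.
Proof.
pose B : forall i, 'I_(len (relabel f E) i) -> 'I_(len (relabel h E) i) := fun i x => x.
apply: (@le_trans _ _ (matching_cost dP B)).
  by apply: ereal_inf_lbound; exists B; split=> //; split=> // i; exists id.
apply: ereal_sup_le => _ [-> | [r [i [j ->]] <-]]; first by left.
by right; exists (dP (f (lab E i j)) (h (lab E i j))) => //; exists (lab E i j).
Qed.

Theorem theorem5p2 (F : fieldType) (R : realType)
  (d : Order.disp_t) (P : finPOrderType d) (dP : P -> P -> R)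
  (dP_metric : is_metric dP) (M N : pmod F P)
  (HM : functorial M) (HN : functorial N) :
  (dist_B dP M N <= d_GT dP M N)%E.
Proof.
apply: le_ereal_inf_tmp => _ [d' [Q [f [g [h [i [Gam [[fg hi Gam_functorial isoM isoN] ->]]]]]]]].
have [_ _ adj_fg _] := fg; have [_ _ adj_hi _] := hi.
pose E := cover_resolution Gam.
have E_res := is_resolution_cover Gam_functorial.
apply: le_trans (dist_R_relabel dP E f h).
apply: ereal_inf_lbound; exists (relabel f E), (relabel h E); split=> //.
- exact: is_resolution_iso isoM (is_resolution_relabel adj_fg E_res).
- exact: is_resolution_iso isoN (is_resolution_relabel adj_hi E_res).
Qed.
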